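(* Let $f:\mathbb{R}^n\to\mathbb{R}\cup\{+\infty\}$ be a polyhedral M-convex function with bounded $\operatorname{dom}_{\mathbb{R}} f$. Let $y\in\operatorname{dom}_{\mathbb{R}} f$ with $\phi_{\mathbb{R}}(y)<0$, let $i,j\in N$ be distinct with $f'_{\mathbb{R}}(y;i,j)=\phi_{\mathbb{R}}(y)$, and let $\lambda>0$ satisfy $f(y+\lambda(\chi_i-\chi_j))-f(y)=\lambda\phi_{\mathbb{R}}(y)$. Put $\hat y=y+\lambda(\chi_i-\chi_j)$. Then (i) $\phi_{\mathbb{R}}(\hat y)\ge\phi_{\mathbb{R}}(y)$; (ii) for all distinct $h,k\in N$, $f'_{\mathbb{R}}(\hat y;h,k)\ge\phi_{\mathbb{R}}(y)$, and if equality holds then $f'_{\mathbb{R}}(\hat y;h,k)=\phi_{\mathbb{R}}(\hat y)$ (i.e. $+\chi_h-\chi_k$ is a steepest descent direction at $\hat y$), $k\neq i$, and $h\neq j$.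
   Context: $N=\{1,\dots,n\}$; $\chi_i$ is the $i$-th unit vector. $\operatorname{dom}_{\mathbb{R}} f=\{x\in\mathbb{R}^n:f(x)<+\infty\}$. A polyhedral convex function $f:\mathbb{R}^n\to\mathbb{R}\cup\{+\infty\}$ (epigraph a polyhedron, $\operatorname{dom}_{\mathbb{R}} f\neq\emptyset$) is M-convex if for all $x,y\in\operatorname{dom}_{\mathbb{R}} f$ and every $i$ with $x(i)>y(i)$ there exist $j$ with $x(j)<y(j)$ and $\epsilon_0>0$ such that $f(x)+f(y)\ge f(x-\epsilon(\chi_i-\chi_j))+f(y+\epsilon(\chi_i-\chi_j))$ for all $\epsilon\in[0,\epsilon_0]$. For $x\in\operatorname{dom}_{\mathbb{R}} f$, $f'_{\mathbb{R}}(x;i,j)=\lim_{\alpha\downarrow0}(f(x+\alpha(\chi_i-\chi_j))-f(x))/\alpha$ (possibly $+\infty$), and $\phi_{\mathbb{R}}(x)=\min_{i,j\in N}f'_{\mathbb{R}}(x;i,j)$. *)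

From HB Require Import structures.
From mathcomp Require Import all_boot all_order all_algebra.
From mathcomp Require Import all_classical all_reals all_analysis.
Set Implicit Arguments. Unset Strict Implicit. Unset Printing Implicit Defensive.
Import Order.TTheory GRing.Theory Num.Theory.
Import numFieldNormedType.Exports.
Local Open Scope ring_scope.
Local Open Scope classical_set_scope.
Local Open Scope ereal_scope.

Definition chi (R : realType) (n : nat) (i : 'I_n) : 'rV[R]_n := delta_mx (0%R : 'I_1) i.

Definition in_dom (R : realType) (n : nat) (f : 'rV[R]_n -> \bar R) (x : 'rV[R]_n) : Prop :=
  f x < +oo.

(* f : R^n -> R ∪ {+oo} is polyhedral convex: f never takes -oo,
   dom f nonempty, and the epigraph {(x,t) | f x <= t} is a polyhedron,
   i.e. a finite intersection of closed half-spaces of R^(n+1). *)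
Definition polyhedral_convex (R : realType) (n : nat) (f : 'rV[R]_n -> \bar R) : Prop :=
  (forall x, f x != -oo) /\
  (exists x, in_dom f x) /\
  exists (m : nat) (A : 'M[R]_(m, n)) (a b : 'I_m -> R),
    forall (x : 'rV[R]_n) (t : R),
      f x <= t%:E <-> (forall k : 'I_m, (\sum_(l < n) A k l * x ord0 l + a k * t <= b k)%R).

Definition M_convex (R : realType) (n : nat) (f : 'rV[R]_n -> \bar R) : Prop :=
  forall x y : 'rV[R]_n, in_dom f x -> in_dom f y ->
  forall i : 'I_n, (y ord0 i < x ord0 i)%R ->
  exists j : 'I_n, (x ord0 j < y ord0 j)%R /\
    exists2 eps0 : R, (0 < eps0)%R &
      forall eps : R, (0 <= eps <= eps0)%R ->
        f (x - eps *: (chi R i - chi R j))%R + f (y + eps *: (chi R i - chi R j))%R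
          <= f x + f y.

Definition bounded_dom (R : realType) (n : nat) (f : 'rV[R]_n -> \bar R) : Prop :=
  exists M : R, forall x, in_dom f x -> forall l : 'I_n, (`|x ord0 l| <= M)%R.

Definition fder (R : realType) (n : nat) (f : 'rV[R]_n -> \bar R)
    (x : 'rV[R]_n) (i j : 'I_n) : \bar R :=
  lim ((fun alpha : R => (f (x + alpha *: (chi R i - chi R j))%R - f x) * (alpha^-1)%:E)
         @ (0 : R)^'+).

Definition phiR (R : realType) (n : nat) (f : 'rV[R]_n -> \bar R) (x : 'rV[R]_n) : \bar R :=
  \big[mine/+oo]_(i < n) \big[mine/+oo]_(j < n) fder f x i j.

From HB Require Import structures.
From mathcomp Require Import all_boot all_order all_algebra.
From mathcomp Require Import all_classical all_reals all_analysis.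
From mathcomp Require Import ring lra.
Import Order.TTheory GRing.Theory Num.Theory.
Import numFieldNormedType.Exports.
Set Implicit Arguments. Unset Strict Implicit. Unset Printing Implicit Defensive.
Local Open Scope classical_set_scope.
Local Open Scope ring_scope.

(* The heart of the proof is the global estimate
     f x >= f y + phi(y) * |x - y|_1 / 2   for every x,
   proved by minimising |v - y|_1 over the compact set of v with
   f v <= c + phi(y) * |v - y|_1 / 2 (c chosen so that x belongs to it): if the
   minimiser v differed from y, the exchange axiom would move v towards y by a
   step e (chi_a - chi_b), lowering |v - y|_1 by 2e while raising f by at most
   -e phi(y), which keeps it in the set.
   Since f yh = f y + lam phi(y) and |yh + e (chi_h - chi_k) - y|_1 <= 2 (lam + e),
   every slope at yh is at least phi(y); when k = i or h = j the distance is
   at most 2 lam for e <= lam, so the slope is at least 0 > phi(y). *)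

Definition l1norm (R : realType) (n : nat) (v : 'rV[R]_n) : R :=
  \sum_(l < n) `|v ord0 l|.

Section L1norm.
Variables (R : realType) (n : nat).
Implicit Types (p q v : 'rV[R]_n) (a b c e l : 'I_n).

Lemma chiE a l : chi R a ord0 l = (l == a)%:R.
Proof. by rewrite /chi mxE eqxx. Qed.

Lemma l1norm0 : l1norm (0 : 'rV[R]_n) = 0.
Proof. by rewrite /l1norm big1 // => l _; rewrite mxE normr0. Qed.

Lemma l1normD p q : l1norm (p + q) <= l1norm p + l1norm q.
Proof.
by rewrite /l1norm -big_split; apply: ler_sum => l _; rewrite mxE ler_normD.
Qed.

Lemma l1normZ (s : R) p : l1norm (s *: p) = `|s| * l1norm p.
Proof. by rewrite /l1norm mulr_sumr; apply: eq_bigr => l _; rewrite mxE normrM. Qed.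

Lemma l1norm_chiB a b : l1norm (chi R a - chi R b) <= 2.
Proof.
apply: (@le_trans _ _ (\sum_(l < n) ((l == a)%:R + (l == b)%:R))).
  apply: ler_sum => l _; rewrite !mxE -!chiE.
  by apply: le_trans (ler_normB _ _) _; rewrite !chiE !normr_nat.
have sum_delta c : \sum_(l < n) ((l == c)%:R : R) = 1.
  by rewrite (bigD1 c) //= eqxx big1 ?addr0 // => l /negbTE ->.
by rewrite big_split /= !sum_delta.
Qed.

Lemma l1norm_chiB_comb (s t : R) a b c e : 0 <= s -> 0 <= t ->
  l1norm (s *: (chi R a - chi R b) + t *: (chi R c - chi R e)) <= 2 * (s + t).
Proof.
move=> s0 t0; apply: le_trans (l1normD _ _) _; rewrite !l1normZ !ger0_norm //.
have := ler_wpM2l s0 (l1norm_chiB a b); have := ler_wpM2l t0 (l1norm_chiB c e).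
lra.
Qed.

Lemma l1norm_exchange v a b (s : R) : a != b -> 0 <= s ->
  s <= v ord0 a -> s <= - v ord0 b ->
  l1norm (v - s *: (chi R a - chi R b)) = l1norm v - 2 * s.
Proof.
move=> ab s0 sa sb; rewrite /l1norm (bigD1 a) //= [in RHS](bigD1 a) //=.
rewrite (bigD1 b) 1?eq_sym //= [in RHS](bigD1 b) 1?eq_sym //=.
rewrite !mxE -!chiE !chiE !eqxx (negbTE ab) eq_sym (negbTE ab) /= subr0 sub0r mulr1.
under eq_bigr => l /andP[la lb] do
  rewrite !mxE -!chiE !chiE (negbTE la) (negbTE lb) subrr mulr0 subr0.
rewrite mulrN1 opprK.
rewrite [`|v _ a - _|]ger0_norm ?subr_ge0 // [`|v _ a|]ger0_norm; last lra.
rewrite [`|v _ b + _|]ler0_norm; last lra.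
rewrite [`|v _ b|]ler0_norm; lra.
Qed.

Lemma l1norm_continuous : continuous (@l1norm R n).
Proof.
apply: continuous_big => [|l _]; first exact: add_continuous.
by move=> v; apply: continuous_comp; [exact: coord_continuous | exact: norm_continuous].
Qed.

Lemma l1norm_dist_continuous q : continuous (fun v => l1norm (v - q)).
Proof.
move=> v; apply: continuous_comp; last exact: l1norm_continuous.
exact: cvgB cvg_id (cvg_cst q).
Qed.

End L1norm.

Definition dquot (R : realType) (n : nat) (f : 'rV[R]_n -> \bar R)
    (x u : 'rV[R]_n) (al : R) : \bar R :=
  ((f (x + al *: u)%R - f x) * (al^-1)%:E)%E.

Lemma phiR_le_fder (R : realType) n (f : 'rV[R]_n -> \bar R) x a b :
  (phiR f x <= fder f x a b)%E.
Proof. by rewrite /phiR (bigD1 a) //= (bigD1 b) //= !ge_min lexx. Qed.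

Lemma le_phiR (R : realType) n (f : 'rV[R]_n -> \bar R) x (c : \bar R) :
  (forall a b, c <= fder f x a b)%E -> (c <= phiR f x)%E.
Proof.
move=> cf; rewrite /phiR; elim/big_ind: _ => [|u w cu cw|a _]; rewrite ?leey//.
  by rewrite le_min cu cw.
elim/big_ind: _ => [|u w cu cw|b _]; rewrite ?leey ?cf//.
by rewrite le_min cu cw.
Qed.

Section Polyhedral.
Local Open Scope ereal_scope.
Variables (R : realType) (n : nat) (f : 'rV[R]_n -> \bar R).
Hypothesis hpoly : polyhedral_convex f.

Lemma polyhedral_neqNy x : f x != -oo.
Proof. by case: hpoly. Qed.

Lemma polyhedral_fin_or_pinfty x : (exists X : R, f x = X%:E) \/ f x = +oo.
Proof.
by have := polyhedral_neqNy x; case: (f x) => [X _|_|//]; [left; exists X|right].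
Qed.

Lemma polyhedral_fin_dom x : in_dom f x -> exists X : R, f x = X%:E.
Proof. by rewrite /in_dom; case: (polyhedral_fin_or_pinfty x) => [//|->]. Qed.

Lemma polyhedral_convex_comb p q (t P Q : R) : (0 <= t <= 1)%R ->
  f p = P%:E -> f q = Q%:E -> f (t *: p + (1 - t) *: q)%R <= (t * P + (1 - t) * Q)%:E.
Proof.
move=> /andP[t0 t1] fp fq; case: hpoly => _ [_ [m [A [a [b epi]]]]].
apply/epi => k.
have hp := (epi p P).1 (ltac:(by rewrite fp)) k.
have hq := (epi q Q).1 (ltac:(by rewrite fq)) k.
have -> : (\sum_(l < n) A k l * (t *: p + (1 - t) *: q) ord0 l =
   t * \sum_(l < n) A k l * p ord0 l + (1 - t) * \sum_(l < n) A k l * q ord0 l)%R.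
  by rewrite !mulr_sumr -big_split /=; apply: eq_bigr => l _; rewrite !mxE; ring.
move: hp hq; set Sp := (\sum_(l < n) _)%R; set Sq := (\sum_(l < n) _)%R => hp hq.
have t1' : (0 <= 1 - t)%R by rewrite subr_ge0.
have := ler_wpM2l t0 hp; have := ler_wpM2l t1' hq.
lra.
Qed.

Lemma compact_sublevel (g : 'rV[R]_n -> R) : bounded_dom f -> continuous g ->
  compact [set v | f v <= (g v)%:E].
Proof.
move=> [M domM] gc; apply: bounded_closed_compact.
  exists `|M|%R; split; first exact: num_real.
  move=> M' MM' v /= fv; rewrite [leLHS]/Num.Def.normr /= mx_normrE.
  apply/bigmax_leP; split => [|[i l] _] /=; first exact: le_trans (ltW MM').
  have /domM /(_ l) : in_dom f v by exact: le_lt_trans fv (ltry _).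
  by rewrite (ord1 i) => /le_trans; apply; rewrite (le_trans (ler_norm M)) ?ltW.
case: hpoly => _ [_ [m [A [a [b epi]]]]].
have -> : [set v | f v <= (g v)%:E] = \bigcap_(k in [set: 'I_m])
    [set v : 'rV[R]_n | (\sum_(l < n) A k l * v ord0 l + a k * g v <= b k)%R].
  apply/seteqP; split => v /=; first by move=> /epi vk k _; exact: vk.
  by move=> vk; apply/epi => k; exact: vk.
apply: closed_bigI => k _.
have sum_cont : continuous (fun v : 'rV[R]_n => \sum_(l < n) A k l * v ord0 l)%R.
  apply: continuous_big => [|l _ w]; first exact: add_continuous.
  exact: cvgMr (@coord_continuous _ _ _ ord0 l w).
have hc : continuous (fun v : 'rV[R]_n => \sum_(l < n) A k l * v ord0 l + a k * g v)%R.
  by move=> v; exact: cvgD (sum_cont v) (cvgMr (gc v)).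
exact: (continuous_closedP _).1 hc _ (@closed_le _ (b k)).
Qed.

Lemma dquot_nondecreasing x u (X : R) (al et : R) : f x = X%:E ->
  (0 < al)%R -> (al <= et)%R -> dquot f x u al <= dquot f x u et.
Proof.
move=> fx al0 alet; have et0 : (0 < et)%R := lt_le_trans al0 alet.
rewrite /dquot fx.
have [[F fF]|->] := polyhedral_fin_or_pinfty (x + et *: u)%R; last first.
  by rewrite addye // gt0_mulye ?leey // lte_fin invr_gt0.
have x_al : (x + al *: u = (al / et) *: (x + et *: u) + (1 - al / et) *: x)%R.
  by apply/rowP => l; rewrite !mxE; field; exact: lt0r_neq0.
have t01 : (0 <= al / et <= 1)%R.
  by rewrite divr_ge0 ?(ltW al0) ?(ltW et0) //= ler_pdivrMr // mul1r.
have := polyhedral_convex_comb t01 fF fx; rewrite -x_al.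
have [[G ->]|->] := polyhedral_fin_or_pinfty (x + al *: u)%R; last by rewrite leye_eq.
rewrite fF -!EFinB -!EFinM !lee_fin => hG.
rewrite -(@ler_pM2l _ al) // mulrCA mulfV ?lt0r_neq0 // mulr1.
suff -> : (al * ((F - X) * et^-1) = al / et * F + (1 - al / et) * X - X)%R by lra.
by field; exact: lt0r_neq0.
Qed.

Lemma dquot_cvg x u (X : R) : f x = X%:E -> cvg (dquot f x u @ (0:R)^'+).
Proof.
move=> fx; apply: cvgP; apply: (@nondecreasing_at_right_cvge _ _ _ (BInfty _ false)) => //.
by move=> al et; rewrite !in_itv /= !andbT => al0 _; exact: dquot_nondecreasing fx al0.
Qed.

Lemma fder_le_dquot x a b (X et : R) : f x = X%:E -> (0 < et)%R ->
  fder f x a b <= dquot f x (chi R a - chi R b) et.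
Proof.
move=> fx et0; apply: lime_le; first exact: dquot_cvg fx.
near=> al; apply: dquot_nondecreasing fx _ _.
  by near: al; exact: nbhs_right_gt.
by near: al; exact: nbhs_right_le.
Unshelve. all: by end_near.
Qed.

Lemma le_fder x a b (X dl : R) (c : \bar R) : f x = X%:E -> (0 < dl)%R ->
  (forall al : R, (0 < al)%R -> (al <= dl)%R -> c <= dquot f x (chi R a - chi R b) al) ->
  c <= fder f x a b.
Proof.
move=> fx dl0 c_le; apply: lime_ge; first exact: dquot_cvg fx.
near=> al; apply: c_le.
  by near: al; exact: nbhs_right_gt.
by near: al; exact: nbhs_right_le.
Unshelve. all: by end_near.
Qed.

End Polyhedral.

Lemma lee_subr_of_addle (R : realType) (a b : \bar R) (c B : R) :
  (a != -oo)%E -> (B%:E <= b)%E -> (a + b <= c%:E)%E -> (a <= (c - B)%:E)%E.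
Proof.
case: a => [a| |] // _; case: b => [b| |] //; rewrite ?lee_fin //.
by move=> Bb abc; lra.
Qed.

Section MConvex.
Local Open Scope ereal_scope.
Variables (R : realType) (n : nat) (f : 'rV[R]_n -> \bar R).
Hypotheses (hpoly : polyhedral_convex f) (hM : M_convex f).

Lemma M_convex_exists_gt x y : in_dom f x -> in_dom f y -> x != y ->
  exists a, (y ord0 a < x ord0 a)%R.
Proof.
move=> hx hy xy.
have /existsP[l xyl] : [exists l, x ord0 l != y ord0 l].
  by apply: contraNT xy => /existsPn eq_xy; apply/eqP/rowP => l; apply/eqP/negPn/eq_xy.
have [xly|yxl|xyl'] := ltgtP (x ord0 l) (y ord0 l); last by rewrite xyl' eqxx in xyl.
- by have [a [yxa _]] := hM hy hx xly; exists a.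
- by exists l.
Qed.

Lemma M_convex_step_toward x y : in_dom f x -> in_dom f y -> x != y ->
  exists a b (et : R), (0 < et)%R /\
    l1norm (x - et *: (chi R a - chi R b) - y) = (l1norm (x - y) - 2 * et)%R /\
    f (x - et *: (chi R a - chi R b))%R + f (y + et *: (chi R a - chi R b))%R <= f x + f y.
Proof.
move=> hx hy xy.
have [a ya] := M_convex_exists_gt hx hy xy.
have [b [xb [e0 e00 exch]]] := hM hx hy ya.
pose et := Num.min e0 (Num.min (x ord0 a - y ord0 a) (y ord0 b - x ord0 b))%R.
have et0 : (0 < et)%R by rewrite !lt_min e00 !subr_gt0 ya xb.
have ab : a != b by apply/eqP => ab; move: ya xb; rewrite ab; lra.
exists a, b, et; split => //; split; last by apply: exch; rewrite ltW //= ge_min lexx.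
rewrite addrAC l1norm_exchange ?(ltW et0) //; rewrite !mxE.
  by rewrite !ge_min lexx orbT.
by rewrite opprB !ge_min lexx !orbT.
Qed.

Hypothesis hbd : bounded_dom f.
Variables (y : 'rV[R]_n) (Y d : R).
Hypotheses (fy : f y = Y%:E) (phiy : phiR f y = d%:E).

Lemma f_ge_line a b (et : R) : (0 < et)%R ->
  (Y + et * d)%:E <= f (y + et *: (chi R a - chi R b))%R.
Proof.
move=> et0; have := le_trans (phiR_le_fder f y a b) (fder_le_dquot hpoly a b fy et0).
rewrite phiy /dquot fy.
have [[F ->]|->] := polyhedral_fin_or_pinfty hpoly (y + et *: (chi R a - chi R b))%R.
  by rewrite -EFinB -EFinM !lee_fin ler_pdivlMr // => ?; lra.
by rewrite leey.
Qed.

Lemma f_ge_phiR_l1norm w : in_dom f w -> (Y + d * l1norm (w - y) / 2)%:E <= f w.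
Proof.
move=> hw; have hy : in_dom f y by rewrite /in_dom fy ltry.
have [W fw] := polyhedral_fin_dom hpoly hw.
pose g v := (W - d * l1norm (w - y) / 2 + d / 2 * l1norm (v - y))%R.
have gc : continuous g.
  move=> v; rewrite /g.
  exact: cvgD (cvg_cst _) (cvgMr (l1norm_dist_continuous (q := y) (x := v))).
pose C := [set v | f v <= (g v)%:E].
have wC : C w by rewrite /C /= fw /g lee_fin; lra.
have [v vC vmin] := EVT_min_rV (ex_intro _ w wC) (compact_sublevel hpoly hbd gc)
  (continuous_subspaceT (l1norm_dist_continuous (q := y))).
move: vC; rewrite inE /C /= => fv_le.
have [vy|vy] := eqVneq v y.
  by move: fv_le; rewrite /g vy subrr l1norm0 fy fw !lee_fin => ?; lra.
have hv : in_dom f v by exact: le_lt_trans fv_le (ltry _).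
have [a [b [et [et0 [dist_v' exch]]]]] := M_convex_step_toward hv hy vy.
have [V fv] := polyhedral_fin_dom hpoly hv.
set v' := (v - et *: (chi R a - chi R b))%R in dist_v' exch.
rewrite fv fy -EFinD in exch.
have fv' := lee_subr_of_addle (polyhedral_neqNy hpoly v') (f_ge_line a b et0) exch.
have v'C : v' \in C.
  rewrite inE /C /=; apply: le_trans fv' _; rewrite /g lee_fin dist_v'.
  by move: fv_le; rewrite fv /g lee_fin; lra.
by have := vmin v' v'C; rewrite dist_v' lerDl oppr_ge0 pmulr_rle0 // leNgt et0.
Qed.

End MConvex.

Section SteepestDescentStep.
Local Open Scope ereal_scope.
Variables (R : realType) (n : nat) (f : 'rV[R]_n -> \bar R).
Hypotheses (hpoly : polyhedral_convex f) (hM : M_convex f) (hbd : bounded_dom f).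
Variables (y : 'rV[R]_n) (Y d : R) (i j : 'I_n) (lam : R).
Hypotheses (fy : f y = Y%:E) (phiy : phiR f y = d%:E) (d_le0 : (d <= 0)%R).
Hypothesis lam_gt0 : (0 < lam)%R.
Local Notation yh := (y + lam *: (chi R i - chi R j))%R.
Hypothesis fyh : f yh = (Y + lam * d)%:E.

Lemma step_shift u (eps : R) : (yh + eps *: u - y = lam *: (chi R i - chi R j) + eps *: u)%R.
Proof. by rewrite addrAC [(y + _)%R]addrC addrK. Qed.

Lemma dquot_step_ge u (eps s : R) : (0 < eps)%R ->
  (l1norm (yh + eps *: u - y) <= 2 * (lam + s * eps))%R -> (d * s)%:E <= dquot f yh u eps.
Proof.
move=> eps0 dist_le; rewrite /dquot fyh.
have [[Z fZ]|->] := polyhedral_fin_or_pinfty hpoly (yh + eps *: u)%R; last first.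
  by rewrite addye // gt0_mulye ?leey // lte_fin invr_gt0.
have : (Y + d * l1norm (yh + eps *: u - y) / 2)%:E <= f (yh + eps *: u)%R.
  by apply: (f_ge_phiR_l1norm hpoly hM hbd fy phiy); rewrite /in_dom fZ ltry.
rewrite fZ -EFinB -EFinM !lee_fin ler_pdivlMr // => Z_ge.
have : (0 <= - d * (2 * (lam + s * eps) - l1norm (yh + eps *: u - y)))%R.
  by rewrite mulr_ge0 // ?oppr_ge0 // subr_ge0.
lra.
Qed.

Lemma fder_step_ge h k : d%:E <= fder f yh h k.
Proof.
apply: (le_fder hpoly fyh ltr01) => eps eps0 _; rewrite -[d in d%:E]mulr1.
by apply: dquot_step_ge; rewrite // mul1r step_shift l1norm_chiB_comb ?ltW.
Qed.

Lemma fder_step_ge0 h k : k = i \/ h = j -> 0 <= fder f yh h k.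
Proof.
move=> ki_hj; apply: (le_fder hpoly fyh lam_gt0) => eps eps0 eps_le.
have -> : 0 = (d * 0)%:E :> \bar R by rewrite mulr0.
apply: dquot_step_ge => //; rewrite mul0r addr0 step_shift.
have lam_eps : (0 <= lam - eps)%R by rewrite subr_ge0.
rewrite -[X in (_ <= 2 * X)%R](subrK eps).
case: ki_hj => [->|->].
- have -> : (lam *: (chi R i - chi R j) + eps *: (chi R h - chi R i) =
      (lam - eps) *: (chi R i - chi R j) + eps *: (chi R h - chi R j))%R.
    by apply/rowP => l; rewrite !mxE; ring.
  exact: l1norm_chiB_comb (ltW eps0).
- have -> : (lam *: (chi R i - chi R j) + eps *: (chi R j - chi R k) =
      (lam - eps) *: (chi R i - chi R j) + eps *: (chi R i - chi R k))%R.
    by apply/rowP => l; rewrite !mxE; ring.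
  exact: l1norm_chiB_comb (ltW eps0).
Qed.

End SteepestDescentStep.

Local Open Scope ereal_scope.

Theorem mainTheorem14 (R : realType) (n : nat) (f : 'rV[R]_n -> \bar R)
  (hpoly : polyhedral_convex f) (hM : M_convex f) (hbd : bounded_dom f)
  (y : 'rV[R]_n) (hy : in_dom f y) (hneg : phiR f y < 0)
  (i j : 'I_n) (hij : i != j) (hsteep : fder f y i j = phiR f y)
  (lam : R) (hlam : (0 < lam)%R)
  (hstep : f (y + lam *: (chi R i - chi R j))%R - f y = lam%:E * phiR f y) :
  let yh := (y + lam *: (chi R i - chi R j))%R in
  phiR f y <= phiR f yh /\
  (forall h k : 'I_n, h != k ->
     phiR f y <= fder f yh h k /\
     (fder f yh h k = phiR f y ->
        fder f yh h k = phiR f yh /\ k != i /\ h != j)).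
Proof.
move=> yh; have [Y fy] := polyhedral_fin_dom hpoly hy.
have [d phiy] : exists d, phiR f y = d%:E.
  move: hneg hstep; case: (phiR f y) => [d _ _|//|_]; first by exists d.
  rewrite fy gt0_muleNy ?lte_fin //.
  by have [[F ->]|->] := polyhedral_fin_or_pinfty hpoly yh; rewrite ?addye.
have d_lt0 : (d < 0)%R by rewrite -lte_fin -phiy.
have fyh : f yh = (Y + lam * d)%:E.
  move: hstep; rewrite phiy fy.
  have [[F ->]|->] := polyhedral_fin_or_pinfty hpoly yh; last by rewrite addye.
  by rewrite -EFinB -EFinM => -[<-]; rewrite addrC subrK.
have step_ge := fder_step_ge hpoly hM hbd fy phiy (ltW d_lt0) hlam fyh.
have phi_le : phiR f y <= phiR f yh by rewrite phiy; apply: le_phiR.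
split => // h k _; split; first by rewrite phiy.
move=> steepest; split; first by apply/le_anti; rewrite phiR_le_fder steepest phi_le.
have step_ge0 := fder_step_ge0 hpoly hM hbd fy phiy (ltW d_lt0) hlam fyh (h := h) (k := k).
by split; apply/eqP => e; [have := step_ge0 (or_introl e) | have := step_ge0 (or_intror e)];
  rewrite steepest phiy lee_fin; lra.
Qed.
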